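(* Let $X$ be a Banach lattice, $S$ a convex $C_0$-semigroup on $X$, $T>0$ and $x_0\in X$. Then there exist $L\ge0$ and $r>0$ such that $\sup_{t\in[0,T]}\|S_x(t)y\|\le L\|y\|$ for all $x\in X$ with $\|x-x_0\|\le r$ and all $y\in X$ with $\|y\|\le r$.
   Context: An operator $T\colon X\to X$ is convex if $T(\lambda x+(1-\lambda)y)\le\lambda Tx+(1-\lambda)Ty$ for all $x,y\in X$, $\lambda\in[0,1]$, and bounded if $\sup_{\|x\|\le r}\|Tx\|<\infty$ for all $r>0$. A convex $C_0$-semigroup is a family $(S(t))_{t\ge0}$ of bounded convex operators $X\to X$ with $S(0)=\mathrm{id}$, $S(t+s)=S(t)S(s)$ for all $s,t\ge0$, and $S(t)x\to x$ as $t\downarrow0$ for all $x$. For $t\ge0$ and $x,y\in X$, $S_x(t)y:=S(t)(x+y)-S(t)x$. *)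

From HB Require Import structures.
From mathcomp Require Import all_boot all_order all_algebra.
From mathcomp Require Import all_classical all_reals all_analysis.
Set Implicit Arguments. Unset Strict Implicit. Unset Printing Implicit Defensive.
Import Order.TTheory GRing.Theory Num.Theory.
Import numFieldNormedType.Exports.
Local Open Scope classical_set_scope.
Local Open Scope ring_scope.

Record banach_lattice (R : realType) (X : completeNormedModType R)
    (le : X -> X -> Prop) (sup : X -> X -> X) : Prop := BanachLattice {
  bl_refl : forall x, le x x;
  bl_antisym : forall x y, le x y -> le y x -> x = y;
  bl_trans : forall x y z, le x y -> le y z -> le x z;
  bl_add : forall x y z, le x y -> le (x + z) (y + z);
  bl_scale : forall (a : R) x y, 0 <= a -> le x y -> le (a *: x) (a *: y);
  bl_sup_ubl : forall x y, le x (sup x y);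
  bl_sup_ubr : forall x y, le y (sup x y);
  bl_sup_least : forall x y z, le x z -> le y z -> le (sup x y) z;
  bl_norm : forall x y, le (sup x (- x)) (sup y (- y)) -> `|x| <= `|y|
}.

Definition convex_op (R : realType) (X : completeNormedModType R)
    (le : X -> X -> Prop) (T : X -> X) : Prop :=
  forall (x y : X) (l : R), 0 <= l <= 1 ->
    le (T (l *: x + (1 - l) *: y)) (l *: T x + (1 - l) *: T y).

Definition bounded_op (R : realType) (X : completeNormedModType R)
    (T : X -> X) : Prop :=
  forall r : R, 0 < r -> exists M : R, forall x : X, `|x| <= r -> `|T x| <= M.

(* convex C_0-semigroup, indexed by t : R with t >= 0 (values at t < 0
   are irrelevant). *)
Definition convex_C0_semigroup (R : realType) (X : completeNormedModType R)
    (le : X -> X -> Prop) (S : R -> X -> X) : Prop :=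
  [/\ (forall t, 0 <= t -> convex_op le (S t) /\ bounded_op (S t)),
      (forall x, S 0 x = x),
      (forall s t x, 0 <= s -> 0 <= t -> S (t + s) x = S t (S s x)) &
      (forall x, S^~ x @ 0^'+ --> x)].

Definition Sx (R : realType) (X : completeNormedModType R)
    (S : R -> X -> X) (x : X) (t : R) (y : X) : X := S t (x + y) - S t x.

From HB Require Import structures.
From mathcomp Require Import all_boot all_order all_algebra.
From mathcomp Require Import all_classical all_reals all_analysis.
From mathcomp Require Import ring lra.
Import Order.TTheory GRing.Theory Num.Theory.
Import numFieldNormedType.Exports.
Local Open Scope classical_set_scope.
Local Open Scope ring_scope.

(* A convex operator bounded by M on a ball of radius 2r is (4M/r)-Lipschitz on
   the concentric ball of radius r: convexity bounds A v - A u from above by a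
   chord towards u + h and from below by a chord towards u - h, and in a Banach
   lattice -b <= z <= a forces |z| <= |a| + |b|.  It therefore suffices to bound
   S(t), t in [0, T], uniformly near x0.  Each S(t) is continuous by the same
   estimate, and every orbit is bounded on [0, T] by strong continuity and the
   semigroup law, so Baire's theorem yields a uniform bound on some ball B(a, rho).
   Midpoint convexity moves it to x0: x0 + d is the midpoint of a + 2d and
   2x0 - a, and x0 is the midpoint of x0 + d and x0 - d. *)

Lemma scale_half_double (R : numFieldType) (V : lmodType R) (v : V) :
  2^-1 *: (v + v) = v.
Proof. by rewrite -mulr2n -(scaler_nat 2 v) scalerA mulVf ?pnatr_eq0 ?scale1r. Qed.

Section BanachLatticeTheory.
Context {R : realType} {X : completeNormedModType R}.
Context {le : X -> X -> Prop} {sup : X -> X -> X}.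
Hypothesis BL : banach_lattice le sup.

Lemma bl_leD {x y u v} : le x y -> le u v -> le (x + u) (y + v).
Proof.
move=> lexy leuv; apply: (bl_trans BL (bl_add BL u lexy)).
by rewrite (addrC y u) (addrC y v); exact: (bl_add BL).
Qed.

Lemma bl_leN {x y} : le x y -> le (- y) (- x).
Proof.
move=> /(bl_add BL (- x - y)).
by rewrite addrA addrN add0r addrCA addrN addr0.
Qed.

Lemma bl_abs_ge0 x : le 0 (sup x (- x)).
Proof.
have := bl_leD (bl_sup_ubl BL x (- x)) (bl_sup_ubr BL x (- x)).
rewrite addrN => /(bl_scale BL (a := 2^-1)).
by rewrite scaler0 scale_half_double; apply; rewrite invr_ge0 ler0n.
Qed.

Lemma bl_abs_id {p} : le 0 p -> sup p (- p) = p.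
Proof.
move=> p_ge0; apply: (bl_antisym BL); last exact: (bl_sup_ubl BL).
apply: (bl_sup_least BL); first exact: (bl_refl BL).
by apply: (bl_trans BL _ p_ge0); rewrite -oppr0; exact: bl_leN.
Qed.

Lemma bl_norm_abs x : `|sup x (- x)| <= `|x|.
Proof.
by apply: (bl_norm BL); rewrite (bl_abs_id (bl_abs_ge0 x)); exact: (bl_refl BL).
Qed.

Lemma bl_norm_sandwich {z a b} : le (- b) z -> le z a -> `|z| <= `|a| + `|b|.
Proof.
move=> lebz leza.
set u := sup a (- a) + sup b (- b).
have u_ge0 : le 0 u by rewrite -[0]addr0; apply: bl_leD; exact: bl_abs_ge0.
have lezu : le z u.
  apply: (bl_trans BL leza); rewrite -[a]addr0.
  by apply: bl_leD; [exact: (bl_sup_ubl BL) | exact: bl_abs_ge0].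
have leNzu : le (- z) u.
  apply: (bl_trans BL (bl_leN lebz)); rewrite opprK -[b]add0r.
  by apply: bl_leD; [exact: bl_abs_ge0 | exact: (bl_sup_ubl BL)].
have : `|z| <= `|u|.
  by apply: (bl_norm BL); rewrite (bl_abs_id u_ge0); exact: (bl_sup_least BL).
move=> /le_trans; apply; apply: (le_trans (ler_normD _ _)).
by apply: lerD; exact: bl_norm_abs.
Qed.

End BanachLatticeTheory.

Section ConvexOperator.
Context {R : realType} {X : completeNormedModType R}.
Context {le : X -> X -> Prop} {sup : X -> X -> X}.
Hypothesis BL : banach_lattice le sup.
Context {A : X -> X}.
Hypothesis cvxA : convex_op le A.

Lemma convex_op_chord_le u h l : 0 <= l <= 1 ->
  le (A (u + l *: h) - A u) (l *: (A (u + h) - A u)).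
Proof.
move=> l01; have := bl_add BL (- A u) (cvxA (u + h) u l l01).
have -> : l *: (u + h) + (1 - l) *: u = u + l *: h.
  by rewrite scalerDr scalerBl scale1r addrC addrA subrK addrC.
by rewrite scalerBl scale1r scalerBr addrA addrAC addrK.
Qed.

Lemma convex_op_chord_ge u h l : 0 <= l ->
  le (- (l *: (A (u - h) - A u))) (A (u + l *: h) - A u).
Proof.
move=> l_ge0; set m := (1 + l)^-1.
have l1_gt0 : 0 < 1 + l by lra.
have m01 : 0 <= m <= 1 by rewrite invr_ge0 (ltW l1_gt0) invf_le1 //; lra.
have m_comp : 1 - m = l * m by rewrite /m; field; rewrite gt_eqF.
have m_inv : (1 + l) * m = 1 by rewrite mulfV ?gt_eqF.
have := cvxA (u + l *: h) (u - h) m m01.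
have -> : m *: (u + l *: h) + (1 - m) *: (u - h) = u.
  rewrite m_comp mulrC -scalerA -scalerDr scalerBr addrA addrAC addrK.
  by rewrite -[X in m *: (X + _)]scale1r -scalerDl scalerA mulrC m_inv scale1r.
move=> /(bl_scale BL (ltW l1_gt0)).
rewrite m_comp scalerDr !scalerA m_inv mulrCA m_inv mulr1 scale1r.
move=> /(bl_add BL (- (l *: A (u - h)) - A u)).
have -> : (1 + l) *: A u + (- (l *: A (u - h)) - A u) = - (l *: (A (u - h) - A u)).
  by rewrite scalerDl scale1r scalerBr opprB addrC addrA subrK addrC.
by rewrite addrA addrK.
Qed.

Lemma convex_op_lipschitz {x r M} : 0 < r ->
  (forall z, `|z - x| <= 2 * r -> `|A z| <= M) ->
  forall u v, `|u - x| <= r -> `|v - u| <= r ->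
  `|A v - A u| <= 4 * M / r * `|v - u|.
Proof.
move=> r_gt0 boundA u v ux vu.
have [->|neq_vu] := eqVneq v u; first by rewrite !subrr normr0 mulr0.
set y := v - u; have y_gt0 : 0 < `|y| by rewrite normr_gt0 subr_eq0.
set l := `|y| / r; set h := (r / `|y|) *: y.
have l01 : 0 <= l <= 1.
  by rewrite /l divr_ge0 ?(ltW r_gt0) //= ler_pdivrMr // mul1r.
have -> : v = u + l *: h.
  by rewrite scalerA mulrA divfK ?gt_eqF // divff ?gt_eqF // scale1r subrKC.
have l_ge0 : 0 <= l by case/andP: l01.
have chord_bound w : `|w - x| <= 2 * r -> `|l *: (A w - A u)| <= l * (M + M).
  move=> wx; rewrite normrZ ger0_norm //; apply: ler_wpM2l => //.
  by apply: (le_trans (ler_normB _ _)); apply: lerD; apply: boundA => //; lra.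
have norm_h : `|h| = r by rewrite normrZ ger0_norm ?divr_ge0 ?ltW // divfK ?gt_eqF.
apply: (le_trans (bl_norm_sandwich BL (convex_op_chord_ge u h l l_ge0)
                                      (convex_op_chord_le u h l l01))).
have -> : 4 * M / r * `|y| = l * (M + M) + l * (M + M).
  by rewrite /l; field; rewrite gt_eqF.
apply: lerD; apply: chord_bound; rewrite addrAC.
- have := ler_normD (u - x) h; lra.
- have := ler_normD (u - x) (- h); rewrite normrN; lra.
Qed.

Lemma convex_op_midpoint x y z : x + y = z + z -> le (A z + A z) (A x + A y).
Proof.
move=> xyz.
have half01 : 0 <= (2^-1 : R) <= 1 by rewrite invr_ge0 ler0n invf_le1 ?ler1n.
have := cvxA x y _ half01.
have -> : 1 - 2^-1 = 2^-1 :> R by field.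
rewrite -!scalerDr xyz scale_half_double => /(bl_scale BL (ler0n R 2)).
by rewrite scalerA mulfV ?pnatr_eq0 // scale1r (scaler_nat 2) mulr2n.
Qed.

Lemma convex_op_bound_shift {a rho k} :
  (forall z, `|a - z| < rho -> `|A z| <= k) ->
  forall x0 d, `|d| < rho / 2 ->
  `|A (x0 + d)| <= k + `|A (x0 + x0 - a)| + 2 * `|A x0|.
Proof.
move=> boundA x0 d d_small; set w := x0 + x0 - a.
have near_a e : `|e| < rho / 2 -> `|A (a + (e + e))| <= k.
  move=> e_small; apply: boundA; rewrite opprD addrA subrr add0r normrN.
  by have := ler_normD e e; lra.
have upper e : le (A (x0 + e) + A (x0 + e)) (A (a + (e + e)) + A w).
  by apply: convex_op_midpoint; rewrite addrC addrA subrK addrACA.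
have lower : le (A x0 + A x0) (A (x0 + d) + A (x0 - d)).
  by apply: convex_op_midpoint; rewrite addrACA subrr addr0.
set z := A (x0 + d) + A (x0 + d).
set q := A (a + (- d + - d)) + A w.
have : le ((A x0 + A x0) + (A x0 + A x0)) (z + q).
  apply: (bl_trans BL (bl_leD BL lower lower)); rewrite addrACA.
  by have := bl_leD BL (bl_refl BL z) (upper (- d)).
move=> /(bl_add BL (- q)); rewrite addrK -opprB => lower_z.
have := bl_norm_sandwich BL lower_z (upper d).
have -> : `|z| = 2 * `|A (x0 + d)| by rewrite /z mulr_natl -mulr2n normrMn.
have norm_4x0 : `|A x0 + A x0 + (A x0 + A x0)| <= 4 * `|A x0|.
  by rewrite -!mulr2n -mulrnA normrMn mulr_natl.
have := ler_normB q (A x0 + A x0 + (A x0 + A x0)).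
have := ler_normD (A (a + (- d + - d))) (A w).
have := ler_normD (A (a + (d + d))) (A w).
have := near_a d d_small; have := near_a (- d); rewrite normrN => /(_ d_small).
lra.
Qed.

Lemma convex_bounded_op_continuous : bounded_op A -> continuous A.
Proof.
move=> bndA x.
have [M boundM] := bndA (`|x| + 2) (ltr_pwDr (ltr0Sn _ 1) (normr_ge0 x)).
have boundA z : `|z - x| <= 2 * 1 -> `|A z| <= M.
  move=> zx; apply: boundM; have := ler_normD x (z - x); rewrite addrC subrK; lra.
have M_ge0 : 0 <= M by apply: le_trans (boundA x _); rewrite ?subrr ?normr0.
apply/cvgrPdist_le => e e_gt0.
have d_gt0 : 0 < Order.min 1 (e / (4 * M + 1)) by rewrite lt_min ltr01 divr_gt0 //; lra.
near=> z.
have zx : `|z - x| <= Order.min 1 (e / (4 * M + 1)).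
  rewrite distrC; near: z; exact: (@cvgr_dist_le _ _ _ _ _ id x cvg_id _ d_gt0).
move: zx; rewrite le_min => /andP[zx1 zxe].
rewrite distrC; apply: (le_trans (convex_op_lipschitz ltr01 boundA x z _ zx1)).
  by rewrite subrr normr0.
rewrite divr1; apply: (le_trans (ler_wpM2l _ zxe)); first lra.
rewrite mulrA ler_pdivrMr; lra.
Unshelve. all: by end_near.
Qed.

End ConvexOperator.

Lemma continuous_pointwise_bounded_ball {R : realType} {V : completeNormedModType R}
    {W : normedModType R} {I : Type} (D : set I) (F : I -> V -> W) :
  (forall i, D i -> continuous (F i)) ->
  (forall x, exists M, forall i, D i -> `|F i x| <= M) ->
  exists a rho k, 0 < rho /\ forall z, ball a rho z -> forall i, D i -> `|F i z| <= k.
Proof.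
move=> contF bndF.
pose O n := \bigcup_(i in D) (Num.norm \o F i) @^-1` [set y | n%:R < y].
have O_open n : open (O n).
  apply: bigcup_open => i Di; apply: open_comp; last exact: open_gt.
  by move=> x _; apply: continuous_comp; [exact: contF | exact: norm_continuous].
have [n /denseNE[U [[a /open_nbhs_nbhs/nbhs_ballP[rho rho_gt0 aU]] UO]]] :
    exists n, ~ dense (O n).
  apply/existsNP => O_dense.
  have [a [_ aO]] :=
    Baire (fun n => conj (O_open n) (O_dense n)) (ex_intro _ 0 Logic.I) openT.
  have [M aM] := bndF a.
  have [i Di /= ltMF] := aO (Num.truncn M).+1 Logic.I.
  have := lt_le_trans (truncnS_gt M) (ltW ltMF).
  by rewrite ltNge aM.
exists a, rho, n%:R; split => // z /aU Uz i Di; rewrite leNgt; apply/negP => ltnF.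
suff : (U `&` O n) z by rewrite UO.
by split => //; exists i.
Qed.

Section ConvexSemigroup.
Context {R : realType} {X : completeNormedModType R}.
Context {le : X -> X -> Prop} {sup : X -> X -> X}.
Hypothesis BL : banach_lattice le sup.
Context {S : R -> X -> X}.
Hypothesis HS : convex_C0_semigroup le S.

Lemma semigroup_continuous t : 0 <= t -> continuous (S t).
Proof.
case: HS => opS _ _ _ /opS[cvxS bndS].
exact: (convex_bounded_op_continuous BL cvxS bndS).
Qed.

Lemma orbit_bounded_extend {x d r} : 0 < d ->
    (forall s, 0 <= s <= d -> `|S s x| <= r) ->
  forall n : nat, exists K, forall t, 0 <= t <= n%:R * d -> `|S t x| <= K.
Proof.
move=> d_gt0 bound_d; case: HS => opS _ S_add _.
elim=> [|n [K IH]].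
  by exists r => t /andP[t_ge0 t_le0]; apply: bound_d; rewrite t_ge0; lra.
have nd_ge0 : 0 <= n%:R * d by rewrite mulr_ge0 // ltW.
have [M bndM] := (opS _ nd_ge0).2 (`|r| + 1) (ltr_pwDr ltr01 (normr_ge0 r)).
exists (Order.max K M) => t /andP[t_ge0 t_le].
have [t_le_nd|nd_lt_t] := lerP t (n%:R * d).
  by apply: le_trans (IH t _) _; rewrite ?t_ge0 ?t_le_nd // le_max lexx.
rewrite -(subrKC (n%:R * d) t) S_add //; last lra.
apply: le_trans (bndM _ _) _; last by rewrite le_max lexx orbT.
rewrite -natr1 mulrDl mul1r in t_le.
have := bound_d (t - n%:R * d); have := ler_norm r; lra.
Qed.

Lemma orbit_bounded x T : exists K, forall t, 0 <= t <= T -> `|S t x| <= K.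
Proof.
case: HS => _ S0 _ /(_ x)/cvgrPdist_le/(_ 1 ltr01).
rewrite near_withinE => /nbhs_ballP[d /= d_gt0 near0].
have bound_d s : 0 <= s <= d / 2 -> `|S s x| <= `|x| + 1.
  move=> /andP[s_ge0 s_le]; have [->|s_neq0] := eqVneq s 0; first by rewrite S0; lra.
  have s_gt0 : 0 < s by rewrite lt_neqAle eq_sym s_neq0.
  have : ball 0 d s by rewrite -ball_normE /= sub0r normrN ger0_norm //; lra.
  move=> /near0 /(_ s_gt0).
  have := ler_normD x (S s x - x); rewrite addrC subrK distrC; lra.
have d2_gt0 : 0 < d / 2 by rewrite divr_gt0.
have [K bndK] := orbit_bounded_extend d2_gt0 bound_d (Num.truncn (T / (d / 2))).+1.
exists K => t /andP[t_ge0 t_le]; apply: bndK; rewrite t_ge0 /=.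
have := truncnS_gt (T / (d / 2)); rewrite ltr_pdivrMr ?divr_gt0 //; lra.
Qed.

Lemma semigroup_locally_bounded x0 T : exists r K, 0 < r /\
  forall z t, `|z - x0| <= r -> 0 <= t <= T -> `|S t z| <= K.
Proof.
have contS t : 0 <= t <= T -> continuous (S t).
  by case/andP => t_ge0 _; exact: semigroup_continuous.
have orbitS x : exists M, forall t, 0 <= t <= T -> `|S t x| <= M.
  exact: orbit_bounded.
have [a [rho [k [rho_gt0 bound_ball]]]] :=
  continuous_pointwise_bounded_ball [set t | 0 <= t <= T] S contS orbitS.
have [Mw bound_w] := orbit_bounded (x0 + x0 - a) T.
have [M0 bound_x0] := orbit_bounded x0 T.
exists (rho / 4), (k + Mw + 2 * M0); split => [|z t zx0 tT]; first by rewrite divr_gt0.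
have [t_ge0 _] := andP tT; have [opS _ _ _] := HS; have [cvxS _] := opS t t_ge0.
have bound_a y : `|a - y| < rho -> `|S t y| <= k.
  by move=> ay; apply: bound_ball; rewrite // -ball_normE.
rewrite -(subrKC x0 z).
apply: le_trans (convex_op_bound_shift BL cvxS bound_a x0 _ _) _; first lra.
apply: lerD; first by apply: lerD => //; exact: bound_w.
by apply: ler_wpM2l => //; exact: bound_x0.
Qed.

End ConvexSemigroup.

Theorem proposition2p2 (R : realType) (X : completeNormedModType R)
    (le : X -> X -> Prop) (sup : X -> X -> X) (S : R -> X -> X)
    (T : R) (x0 : X) :
  banach_lattice le sup -> convex_C0_semigroup le S -> 0 < T ->
  exists L : R, exists r : R, 0 <= L /\ 0 < r /\
    forall x y : X, `|x - x0| <= r -> `|y| <= r ->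
      forall t : R, 0 <= t <= T -> `|Sx S x t y| <= L * `|y|.
Proof.
move=> BL HS T_gt0.
have [r [K [r_gt0 bound_near]]] := semigroup_locally_bounded BL HS x0 T.
have K_ge0 : 0 <= K.
  apply: le_trans (normr_ge0 _) (bound_near x0 0 _ _).
    by rewrite subrr normr0 ltW.
  by rewrite lexx ltW.
have r2_gt0 : 0 < r / 2 by rewrite divr_gt0.
exists (4 * K / (r / 2)), (r / 2); split.
  exact: divr_ge0 (mulr_ge0 (ler0n _ 4) K_ge0) (ltW r2_gt0).
split=> // x y xx0 yr t tT; have [t_ge0 _] := andP tT.
have [opS _ _ _] := HS; have [cvxS _] := opS t t_ge0.
have bound_t z : `|z - x0| <= 2 * (r / 2) -> `|S t z| <= K.
  by rewrite mulrC divfK ?pnatr_eq0 // => zx0; exact: bound_near.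
have := convex_op_lipschitz BL cvxS r2_gt0 bound_t x (x + y) xx0.
by rewrite addrAC subrr add0r; apply.
Qed.
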